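(* Let $s\in\mathbb N$, $N\ge1$, and let $A_s,B_s>0$ be constants such that for all $N'\ge1$ and $r'\ge2$, if $\boldsymbol k_1,\dots,\boldsymbol k_{r'}$ are i.i.d. uniform on $Q_{N'}$ then $\Pr(\oplus_{i=1}^{r'}\boldsymbol k_i\in Q_{N'})\le A_s^{r'}N'^{r'/4}r'^{-B_s\sqrt{N'}}$. Let $I=\{V\subseteq Q_N:\mathrm{rank}(V)<|V|\}$, $I^*=\{V\in I:\text{every proper subset }W\subsetneq V\text{ has full rank}\}$, and $I^*_r=\{V\in I^*:|V|=r\}$. Then for all $r\ge2$, $$|I^*_{r+1}|\le\frac{|Q_N|^r}{(r+1)!}A_s^rN^{r/4}r^{-B_s\sqrt N}.$$
   Context: For $k\in\mathbb N_0$, $k=\sum_{\ell\ge1}a_\ell2^{\ell-1}$, $\kappa=\{\ell:a_\ell=1\}$; for $\boldsymbol k\in\mathbb N_0^s$ with digit sets $\kappa_j$, $\|\boldsymbol\kappa\|_1=\sum_j\sum_{\ell\in\kappa_j}\ell$; $Q_N=\{\boldsymbol k\in\mathbb N_0^s\setminus\{\boldsymbol0\}:\|\boldsymbol\kappa\|_1\le N\}$. $\oplus$ is componentwise bitwise XOR on $\mathbb N_0^s$, making it an $\mathbb F_2$-vector space; the rank of a finite subset $V$ is the size of its largest linearly independent subset, and $V$ has full rank if $\mathrm{rank}(V)=|V|$. *)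

From Stdlib Require Import Reals.
From mathcomp Require Import all_boot.
Local Open Scope nat_scope.
Set Implicit Arguments. Unset Strict Implicit. Unset Printing Implicit Defensive.

(* Vectors k in N_0^s with every coordinate < 2^N.  Every k with
   ||kappa||_1 <= N has all coordinates < 2^N, so Q_N lives inside this type. *)
Definition vecT (N s : nat) := {ffun 'I_s -> 'I_(2 ^ N)}.

(* digit a_l of k (l >= 1): k = sum_l a_l 2^(l-1) *)
Definition digit (k l : nat) : nat := odd (k %/ 2 ^ l.-1).

(* sum of l over kappa = {l : a_l = 1}; digits with l > k vanish since 2^(l-1) >= l *)
Definition wt (k : nat) : nat := \sum_(1 <= l < k.+1) digit k l * l.

Definition normk (s : nat) (v : 'I_s -> nat) : nat := \sum_(j < s) wt (v j).

Definition inQ (N s : nat) (v : 'I_s -> nat) : bool :=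
  [exists j, v j != 0] && (normk v <= N).

Definition QN (N s : nat) : {set vecT N s} :=
  [set x : vecT N s | inQ N (fun j => (x j : nat))].

Definition xorv (N s : nat) (W : seq (vecT N s)) : 'I_s -> nat :=
  fun j => foldr (fun (x : vecT N s) acc => Nat.lxor (x j : nat) acc) 0 W.

(* linear independence over F_2: no nonempty subset has XOR-sum 0 *)
Definition indep (N s : nat) (W : {set vecT N s}) : bool :=
  [forall U : {set vecT N s},
     ((U \subset W) && (U != set0)) ==> [exists j, xorv (enum U) j != 0]].

Definition rank (N s : nat) (V : {set vecT N s}) : nat :=
  \max_(W : {set vecT N s} | (W \subset V) && indep W) #|W|.

Definition Iset (N s : nat) : {set {set vecT N s}} :=
  [set V : {set vecT N s} | (V \subset QN N s) && (rank V < #|V|)].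

Definition Istar (N s : nat) : {set {set vecT N s}} :=
  [set V : {set vecT N s} in Iset N s | [forall W : {set vecT N s}, (W \proper V) ==> (rank W == #|W|)]].

Definition Istar_r (N s r : nat) : {set {set vecT N s}} :=
  [set V : {set vecT N s} in Istar N s | #|V| == r].

Definition good_tuples (N s r : nat) : nat :=
  #|[set f : {ffun 'I_r -> vecT N s} |
       [forall i, f i \in QN N s] && inQ N (xorv [seq f i | i <- enum 'I_r])]|.

(* Pr(k_1 (+) ... (+) k_r in Q_N) for k_i i.i.d. uniform on Q_N *)
Definition probXorQ (N s r : nat) : R :=
  Rdiv (INR (good_tuples N s r)) (INR (#|QN N s| ^ r)%nat).

(** A minimal dependent set V has XOR-sum 0, and no smaller nonempty subset
   does.  Hence in each of the (r+1)! orderings (k_1, ..., k_{r+1}) of a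
   V in I*_{r+1} the last vector is the XOR of the first r, which determines
   the ordering from (k_1, ..., k_r), an r-tuple of Q_N whose XOR lies in
   Q_N.  So (r+1)! |I*_{r+1}| is at most the number of such r-tuples, which
   is |Q_N|^r times the probability bounded in the hypothesis. *)

From Stdlib Require Import Reals PeanoNat.
From HB Require Import structures.
From mathcomp Require Import all_boot.

Set Implicit Arguments.
Unset Strict Implicit.
Unset Printing Implicit Defensive.

Lemma lxorA : associative Nat.lxor.
Proof. by move=> a b c; rewrite Nat.lxor_assoc. Qed.

HB.instance Definition _ :=
  Monoid.isComLaw.Build nat 0 Nat.lxor lxorA Nat.lxor_comm Nat.lxor_0_l.

Section Enumerations.
Variable T : finType.

Definition enumerations (n : nat) (S : {set {set T}}) :=
  [set f : {ffun 'I_n -> T} | injectiveb f && (f @: [set: 'I_n] \in S)].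

Lemma card_enumerations n (S : {set {set T}}) :
  {in S, forall V : {set T}, #|V| = n} -> #|enumerations n S| = #|S| * n`!.
Proof.
move=> cardS; rewrite -sum1_card.
rewrite (partition_big (fun f : {ffun 'I_n -> T} => f @: [set: 'I_n]) (mem S));
  last by move=> f; rewrite inE => /andP[].
rewrite -sum_nat_const; apply: eq_bigr => V SV.
rewrite sum1dep_card -ffactnn.
have -> : n ^_ n = #|V| ^_ #|'I_n| by rewrite card_ord cardS.
rewrite -card_inj_ffuns_on; apply: eq_card => f; rewrite !inE.
apply/andP/andP => [[/andP[injf _] /eqP <-]|[/ffun_onP fV injf]].
  by split=> //; apply/ffun_onP => x; apply: imset_f.
have imfV : f @: [set: 'I_n] = V.
  apply/eqP; rewrite eqEcard; apply/andP; split.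
    by apply/subsetP => _ /imsetP[x _ ->].
  by rewrite card_imset ?cardsT ?card_ord ?cardS //; apply/injectiveP.
by rewrite imfV injf eqxx; split.
Qed.

Variable r : nat.

Definition ffun_belast (f : {ffun 'I_r.+1 -> T}) : {ffun 'I_r -> T} :=
  [ffun i => f (widen_ord (leqnSn r) i)].

Lemma ffun_belast_inj (D : {pred {ffun 'I_r.+1 -> T}}) :
  {in D &, forall f g, ffun_belast f = ffun_belast g -> f ord_max = g ord_max} ->
  {in D &, injective ffun_belast}.
Proof.
move=> lastD f g Df Dg efg; apply/ffunP => i.
case: (unliftP ord_max i) => [k ->|->]; last exact: lastD.
have -> : lift ord_max k = widen_ord (leqnSn r) k.
  by apply: val_inj; rewrite /= /bump leqNgt ltn_ord.
by have := congr1 (fun h : {ffun 'I_r -> T} => h k) efg; rewrite !ffunE.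
Qed.

End Enumerations.

Section MinimalDependentSets.
Variables N s : nat.
Local Notation vT := (vecT N s).

Lemma xorvE (W : seq vT) j : xorv W j = \big[Nat.lxor/0]_(x <- W) (x j : nat).
Proof. by elim: W => [|x W IH]; rewrite ?big_nil ?big_cons //= -IH. Qed.

Lemma xorv_enum_imset n (f : 'I_n -> vT) j : injective f ->
  xorv (enum (f @: [set: 'I_n])) j = \big[Nat.lxor/0]_(i < n) (f i j : nat).
Proof.
move=> injf; rewrite xorvE.
have perm_f : perm_eq (enum (f @: [set: 'I_n])) [seq f i | i <- enum 'I_n].
  apply: uniq_perm => [||y]; first exact: enum_uniq.
    by rewrite map_inj_uniq //; exact: enum_uniq.
  rewrite mem_enum; apply/imsetP/mapP => [] [x _ ->]; exists x => //.
  by rewrite mem_enum.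
by rewrite (perm_big _ perm_f) big_map big_enum; apply: eq_bigl.
Qed.

Lemma rank_ge_indep (V W : {set vT}) : W \subset V -> indep W -> #|W| <= rank V.
Proof.
move=> sWV indW.
apply: (@leq_bigmax_cond _ (fun U : {set vT} => (U \subset V) && indep U)
  (fun U => #|U|)).
by rewrite /= sWV.
Qed.

Lemma full_rank_indep (V : {set vT}) : rank V = #|V| -> indep V.
Proof.
move=> rankV.
pose P := [pred W : {set vT} | (W \subset V) && indep W].
have P_gt0 : 0 < #|P|.
  apply/card_gt0P; exists set0; rewrite inE sub0set /=.
  by apply/forallP => U; apply/implyP => /andP[]; rewrite subset0 => ->.
have [W /andP[sWV indW] rankW] := @eq_bigmax_cond _ P (fun W => #|W|) P_gt0.
suff <- : W = V by [].
by apply/eqP; rewrite eqEcard sWV -rankV -rankW /=.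
Qed.

(* The dependent subset provided by ~~ indep V must be V itself, since every
   proper subset is independent. *)
Lemma Istar_xorv0 (V : {set vT}) : V \in Istar N s -> forall j, xorv (enum V) j = 0.
Proof.
rewrite !inE => /andP[/andP[_ rankV] /forallP minV].
have /forallPn[U] : ~~ indep V.
  by apply: contraTN rankV => /(rank_ge_indep (subxx V)); rewrite leqNgt.
rewrite negb_imply => /andP[/andP[sUV U0] /existsPn xorU0].
suff <- : U = V by move=> j; apply/eqP; rewrite -[_ == 0]negbK xorU0.
apply/eqP/negPn/negP => neUV.
have /eqP/full_rank_indep/forallP/(_ U) : rank U == #|U|.
  by have := minV U; rewrite properEneq neUV sUV.
by rewrite subxx U0 => /existsP[j]; rewrite (negPf (xorU0 j)).
Qed.

Variable r : nat.

Lemma enumeration_Istar_last (f : {ffun 'I_r.+1 -> vT}) :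
  f \in enumerations r.+1 (Istar_r N s r.+1) ->
  forall j, f ord_max j = xorv [seq ffun_belast f i | i <- enum 'I_r] j :> nat.
Proof.
rewrite inE => /andP[/injectiveP injf]; rewrite inE => /andP[Vstar _] j.
have := Istar_xorv0 Vstar j; rewrite xorv_enum_imset // big_ord_recr /=.
move=> /Nat.lxor_eq <-; rewrite xorvE big_map big_enum /=.
by apply: eq_big => // i; rewrite ffunE.
Qed.

Lemma inQ_ext (v w : 'I_s -> nat) : v =1 w -> inQ N v = inQ N w.
Proof.
move=> evw; rewrite /inQ /normk; under eq_existsb do rewrite evw.
by under eq_bigr do rewrite evw.
Qed.

Lemma card_Istar_r_le_good_tuples : #|Istar_r N s r.+1| * r.+1`! <= good_tuples N s r.
Proof.
have cardV : {in Istar_r N s r.+1, forall V : {set vT}, #|V| = r.+1}.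
  by move=> V; rewrite inE => /andP[_ /eqP].
rewrite -(card_enumerations cardV).
have belast_inj :
    {in enumerations r.+1 (Istar_r N s r.+1) &, injective (@ffun_belast vT r)}.
  apply: ffun_belast_inj => f g Ef Eg efg; apply/ffunP => j; apply: val_inj.
  by rewrite /= enumeration_Istar_last // efg -enumeration_Istar_last.
rewrite -(card_in_imset belast_inj).
apply: subset_leq_card; apply/subsetP => _ /imsetP[f Ef ->].
have sVQ : f @: [set: 'I_r.+1] \subset QN N s.
  by move: Ef; rewrite !inE => /andP[_ /andP[/andP[/andP[]]]].
have fQ x : f x \in QN N s by apply: (subsetP sVQ); apply: imset_f.
rewrite inE; apply/andP; split; first by apply/forallP => i; rewrite ffunE.
by rewrite -(inQ_ext (enumeration_Istar_last Ef)); have := fQ ord_max; rewrite inE.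
Qed.

Lemma good_tuples_le_pow : good_tuples N s r <= #|QN N s| ^ r.
Proof.
have <- : #|[set g : {ffun 'I_r -> vT} in ffun_on (QN N s)]| = #|QN N s| ^ r.
  by rewrite cardsE card_ffun_on card_ord.
apply: subset_leq_card; apply/subsetP => g; rewrite !inE => /andP[/forallP gQ _].
exact/ffun_onP.
Qed.

End MinimalDependentSets.

Local Open Scope R_scope.

Lemma good_tuplesE (N s r : nat) :
  INR (good_tuples N s r) = INR (#|QN N s| ^ r) * probXorQ N s r.
Proof.
rewrite /probXorQ; have [Q0|Qpos] := posnP (#|QN N s| ^ r).
  by move: (good_tuples_le_pow N s r); rewrite Q0 leqn0 => /eqP ->; rewrite /= Rmult_0_l.
by field; apply: not_0_INR => Q0; move: Qpos; rewrite Q0.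
Qed.

Theorem lemma6 (s N : nat) (A B : R) :
  (0 < s)%N -> (1 <= N)%N -> 0 < A -> 0 < B ->
  (forall N' r' : nat, (1 <= N')%N -> (2 <= r')%N ->
     probXorQ N' s r' <=
       pow A r' * Rpower (INR N') (INR r' / 4) * Rpower (INR r') (- (B * sqrt (INR N')))) ->
  forall r : nat, (2 <= r)%N ->
    INR #|Istar_r N s r.+1| <=
      INR (#|QN N s| ^ r)%N / INR (r.+1)`! * pow A r * Rpower (INR N) (INR r / 4)
        * Rpower (INR r) (- (B * sqrt (INR N))).
Proof.
move=> _ N_ge1 _ _ probXorQ_le r r_ge2.
have fact_pos : 0 < INR (r.+1)`! by apply: lt_0_INR; apply/ltP; apply: fact_gt0.
have count_le : INR #|Istar_r N s r.+1| * INR (r.+1)`! <= INR (good_tuples N s r).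
  by rewrite -mult_INR; apply: le_INR; apply/leP; apply: card_Istar_r_le_good_tuples.
have := probXorQ_le N r N_ge1 r_ge2; set bound := (A ^ r * _ * _) => prob_le.
apply: (Rmult_le_reg_r _ _ _ fact_pos); apply: (Rle_trans _ _ _ count_le).
have -> : INR (#|QN N s| ^ r) / INR (r.+1)`! * A ^ r * Rpower (INR N) (INR r / 4)
    * Rpower (INR r) (- (B * sqrt (INR N))) * INR (r.+1)`!
    = INR (#|QN N s| ^ r) * bound.
  by rewrite /bound; field; apply: Rgt_not_eq.
by rewrite good_tuplesE; apply: Rmult_le_compat_l; first exact: pos_INR.
Qed.
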